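(* In the setting below, let $P$ be a positive definite solution of the Covariance Extension Equation $P=\Gamma(P-PH'HP)\Gamma'+\big(u+U(\Sigma+\Gamma PH')\big)\big(u+U(\Sigma+\Gamma PH')\big)'$ with $HPH'<I_\ell$, let $R=(I_\ell-HPH')^{1/2}$ (so $RR'=I_\ell-HPH'$), and let $$A=(\Gamma PH'+\Sigma)-U(\Gamma PH'+\Sigma)-u,\qquad B=(\Gamma PH'+\Sigma)+U(\Gamma PH'+\Sigma)+u.$$ Let $N_n=I_\ell\otimes(0,\dots,0,1)\in\mathbb{R}^{\ell\times\ell n}$ and $A_n=N_nA$, $B_n=N_nB$, $\Sigma_n=N_n\Sigma$. Then $$A_n+B_n=2\Sigma_nRR'.$$
   Context: Setting. $\ell\ge1$, $m\ge0$, positive integers $n_0,\dots,n_m$, $n:=\sum_j n_j-1\ge1$; distinct points $z_0=0,z_1,\dots,z_m$ in the open unit disc; $\ell\times\ell$ matrices $W_{jk}$ ($k=0,\dots,n_j-1$) with $W_{00}=\tfrac12I_\ell$. $W_j$ is the $\ell n_j\times\ell n_j$ block lower-triangular block-Toeplitz matrix with $W_{j0}$ on the block diagonal and $W_{jk}$ on the $k$-th block subdiagonal; $W=\operatorname{diag}(W_0,\dots,W_m)$. $Z_j$ is the $n_j\times n_j$ lower bidiagonal matrix with $z_j$ on the diagonal and $1$ on the subdiagonal; $Z=\operatorname{diag}(Z_0,\dots,Z_m)$. $e\in\mathbb{R}^{n+1}$ stacks the vectors $(1,0,\dots,0)'\in\mathbb{R}^{n_j}$. $T=(W-\tfrac12I)(W+\tfrac12I)^{-1}$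 and $\hat T=T(e\otimes I_\ell)$. With $h_n=(1,0,\dots,0)\in\mathbb{R}^{1\times n}$ and $J_n$ the $n\times n$ shift matrix (ones on the superdiagonal): $H=I_\ell\otimes h_n\in\mathbb{R}^{\ell\times\ell n}$, $J=I_\ell\otimes J_n$. For $k=1,\dots,n$, $N_k=I_\ell\otimes\varepsilon_k$ with $\varepsilon_k\in\mathbb{R}^{1\times n}$ the $k$-th unit row vector; $N=[N_1;\dots;N_n]$; $V=[(Ze)\otimes I_\ell,\dots,(Z^ne)\otimes I_\ell]$; $(VN)^\dagger$ is the Moore–Penrose pseudoinverse of $VN$. $u=(VN)^\dagger\hat T$ and $U$ is the linear map $U(Q)=(VN)^\dagger\big(\sum_{k=1}^nZ^k\otimes(N_kQ)\big)\hat T$ on $\ell n\times\ell$ matrices. $\Sigma\in\mathbb{R}^{\ell n\times\ell}$ is such that $\det(z^nI_\ell+(I_\ell\otimes(z^{n-1},\dots,z,1))\Sigma)$ has all zeros in the open unit disc, and $\Gamma=J-\Sigma H$. A prime denotes transpose and $\otimes$ the Kronecker product. *)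

From HB Require Import structures.
From mathcomp Require Import all_boot all_order all_algebra.
From mathcomp Require Import mxtens complex.
Set Implicit Arguments. Unset Strict Implicit. Unset Printing Implicit Defensive.
Import Order.TTheory GRing.Theory Num.Theory.
Local Open Scope ring_scope.

(* Kronecker product: mathcomp real_closed's  A *t B, whose row/column index
   (i,j) is  i * (size of B) + j, i.e. the usual Kronecker ordering. *)

(* blkpos ns k = (j, o): the global index k (0-based) of a vector stacked from
   blocks of sizes ns_0, ns_1, ... lies in block j at offset o. *)
Fixpoint blkpos (ns : seq nat) (k : nat) : nat * nat :=
  match ns with
  | [::] => (0%N, k)
  | a :: s => if (k < a)%N then (0%N, k)
              else let p := blkpos s (k - a)%N in (p.1.+1, p.2)
  end.

Section Setting.
Variable R : rcfType.

(* Z = diag(Z_0,...,Z_m), Z_j lower bidiagonal, z_j on the diagonal, 1 on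
   the subdiagonal. *)
Definition Zmat (ns : seq nat) (z : nat -> R) (N : nat) : 'M[R]_N :=
  \matrix_(a, b)
    let pa := blkpos ns a in let pb := blkpos ns b in
    if pa.1 == pb.1 then
      (if pa.2 == pb.2 then z pa.1 else if pa.2 == pb.2.+1 then 1 else 0)
    else 0.

(* e stacks the vectors (1,0,...,0)' of length n_j. *)
Definition evec (ns : seq nat) (N : nat) : 'cV[R]_N :=
  \col_a ((blkpos ns a).2 == 0%N)%:R.

(* W = diag(W_0,...,W_m), W_j block lower-triangular block-Toeplitz with
   W_{j0} on the block diagonal and W_{jk} on the k-th block subdiagonal. *)
Definition Wmat (l : nat) (ns : seq nat) (Wc : nat -> nat -> 'M[R]_l) (N : nat)
  : 'M[R]_(N * l) :=
  \matrix_(i, j)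
    let pa := blkpos ns (mxtens_unindex i).1 in
    let pb := blkpos ns (mxtens_unindex j).1 in
    if (pa.1 == pb.1) && (pb.2 <= pa.2)%N
    then Wc pa.1 (pa.2 - pb.2)%N (mxtens_unindex i).2 (mxtens_unindex j).2
    else 0.

Definition Tmat (M : nat) (W : 'M[R]_M) : 'M[R]_M :=
  (W - (2^-1 : R)%:M) *m invmx (W + (2^-1 : R)%:M).

Definition ekron (l N : nat) (e : 'cV[R]_N) : 'M[R]_(N * l, l) :=
  castmx (erefl, mul1n l) (e *t (1%:M : 'M[R]_l)).

Definition hrow (n : nat) : 'rV[R]_n := \row_(j < n) (j == 0%N :> nat)%:R.
Definition Jn (n : nat) : 'M[R]_n := \matrix_(i, j) (j == i.+1 :> nat)%:R.
(* eps n k = k-th unit row vector of length n (k is 1-based, 1 <= k <= n) *)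
Definition eps (n k : nat) : 'rV[R]_n := \row_(j < n) (j.+1 == k)%:R.
Definition lastrow (n : nat) : 'rV[R]_n := \row_(j < n) (j == n.-1 :> nat)%:R.

Definition Ikron (l n : nat) (r : 'rV[R]_n) : 'M[R]_(l, l * n) :=
  castmx (muln1 l, erefl) ((1%:M : 'M[R]_l) *t r).

Definition Hmat l n := Ikron l (hrow n).
Definition Jmat l n : 'M[R]_(l * n) := (1%:M : 'M[R]_l) *t Jn n.
Definition Nk l n k := Ikron l (eps n k).
Definition Nlast l n := Ikron l (lastrow n).

(* N = [N_1; ...; N_n] (block column, k-th block row is N_k) *)
Definition Nstack (l n : nat) : 'M[R]_(n * l, l * n) :=
  \matrix_(i, j) Nk l n ((mxtens_unindex i).1).+1 (mxtens_unindex i).2 j.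

(* V = [(Ze) (x) I_l, ..., (Z^n e) (x) I_l] = K (x) I_l where K has
   columns Ze, ..., Z^n e. *)
Definition Vmat (l n : nat) (Z : 'M[R]_n.+1) (e : 'cV[R]_n.+1)
  : 'M[R]_(n.+1 * l, n * l) :=
  (\matrix_(i < n.+1, k < n) (Z ^+ k.+1 *m e) i 0) *t (1%:M : 'M[R]_l).

Definition is_MPinv (p q : nat) (A : 'M[R]_(p, q)) (X : 'M[R]_(q, p)) :=
  [/\ A *m X *m A = A, X *m A *m X = X,
      (A *m X)^T = A *m X & (X *m A)^T = X *m A].

Definition Uop (l n : nat) (Xp : 'M[R]_(l * n, n.+1 * l)) (Z : 'M[R]_n.+1)
  (That : 'M[R]_(n.+1 * l, l)) (Q : 'M[R]_(l * n, l)) : 'M[R]_(l * n, l) :=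
  Xp *m (\sum_(k < n) (Z ^+ k.+1 *t (Nk l n k.+1 *m Q))) *m That.

Definition Sigpoly (l n : nat) (Sig : 'M[R]_(l * n, l)) : {poly R} :=
  \det (\matrix_(a, b)
          ((a == b)%:R *: 'X^n
           + \sum_(c < n) (Sig (mxtens_index (a, c)) b)%:P * 'X^(n - c.+1))
        : 'M[{poly R}]_l).

Definition zeros_in_disc (p : {poly R}) :=
  forall w : R[i], root (map_poly (real_complex R) p) w -> `|w| < 1.

Definition posdef (k : nat) (M : 'M[R]_k) :=
  M^T = M /\ forall x : 'cV[R]_k, x != 0 -> 0 < (x^T *m M *m x) 0 0.
Definition psd (k : nat) (M : 'M[R]_k) :=
  M^T = M /\ forall x : 'cV[R]_k, 0 <= (x^T *m M *m x) 0 0.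

End Setting.

From HB Require Import structures.
From mathcomp Require Import all_boot all_order all_algebra.
From mathcomp Require Import mxtens complex.
From mathcomp Require Import zify.
Import Order.TTheory GRing.Theory Num.Theory.
Local Open Scope ring_scope.

(* Since A + B = 2 (Gam P H' + Sig) and Gam = J - Sig H, it suffices that the
   last block row N_n of J vanishes: then N_n (Gam P H' + Sig) equals
   N_n Sig (I - H P H') = N_n Sig R R'.  No property of P, U, u or R beyond
   R R' = I - H P H' is needed. *)

Section LastBlockRow.
Variable R : rcfType.

Lemma lastrow_mulJn (n : nat) : lastrow R n *m Jn R n = 0.
Proof.
apply/matrixP=> i j; rewrite !mxE big1 // => k _; rewrite !mxE.
have [hk|] := eqVneq (k : nat) n.-1; last by rewrite mul0r.
have [hj|] := eqVneq (j : nat) k.+1; last by rewrite mulr0.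
by have := ltn_ord j; have := ltn_ord k; lia.
Qed.

Lemma Nlast_mulJmat (l n : nat) : Nlast R l n *m Jmat R l n = 0.
Proof.
rewrite /Nlast /Ikron /Jmat -[_ *t Jn R n](@castmx_id _ _ _ (erefl, erefl)).
rewrite -castmx_mul tensmx_mul lastrow_mulJn tensmx0.
by apply/matrixP=> i j; rewrite castmxE !mxE.
Qed.

Lemma Nlast_mulGammaD (l n : nat) (Sig : 'M[R]_(l * n, l))
    (H : 'M[R]_(l, l * n)) (M : 'M[R]_(l * n, l)) :
  Nlast R l n *m ((Jmat R l n - Sig *m H) *m M + Sig)
  = Nlast R l n *m Sig *m (1%:M - H *m M).
Proof.
rewrite mulmxDr mulmxBl mulmxBr !mulmxA Nlast_mulJmat mul0mx sub0r.
by rewrite mulmxBr mulmx1 addrC !mulmxA.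
Qed.

End LastBlockRow.

Lemma subr_add_addr (V : zmodType) (a b c : V) : (a - b - c) + (a + b + c) = a + a.
Proof. by rewrite addrACA addNr addr0 addrACA addNr addr0. Qed.

Theorem lemma5 (R : rcfType) (l m n : nat) (ns : seq nat) (z : nat -> R)
  (Wc : nat -> nat -> 'M[R]_l) (Sig : 'M[R]_(l * n, l))
  (Xp : 'M[R]_(l * n, n.+1 * l)) (P : 'M[R]_(l * n)) (Rm : 'M[R]_l) :
  (1 <= l)%N -> size ns = m.+1 -> all (fun k => 0 < k)%N ns ->
  sumn ns = n.+1 -> (1 <= n)%N ->
  z 0%N = 0 ->
  (forall i j, (i < m.+1)%N -> (j < m.+1)%N -> i != j -> z i != z j) ->
  (forall j, (j < m.+1)%N -> `|z j| < 1) ->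
  Wc 0%N 0%N = (2^-1 : R)%:M ->
  let Z := Zmat ns z n.+1 in
  let e := evec R ns n.+1 in
  let W := Wmat ns Wc n.+1 in
  W + (2^-1 : R)%:M \in unitmx ->
  let That := Tmat W *m ekron l e in
  let H := Hmat R l n in
  let Gam := Jmat R l n - Sig *m H in
  zeros_in_disc (Sigpoly Sig) ->
  is_MPinv (Vmat l Z e *m Nstack R l n) Xp ->
  let u := Xp *m That in
  let U := Uop Xp Z That in
  posdef P ->
  P = Gam *m (P - P *m H^T *m H *m P) *m Gam^T
      + (u + U (Sig + Gam *m P *m H^T)) *m (u + U (Sig + Gam *m P *m H^T))^T ->
  posdef (1%:M - H *m P *m H^T) ->
  Rm^T = Rm -> psd Rm -> Rm *m Rm = 1%:M - H *m P *m H^T ->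
  let A := (Gam *m P *m H^T + Sig) - U (Gam *m P *m H^T + Sig) - u in
  let B := (Gam *m P *m H^T + Sig) + U (Gam *m P *m H^T + Sig) + u in
  let Nn := Nlast R l n in
  Nn *m A + Nn *m B = 2%:R *: (Nn *m Sig *m Rm *m Rm^T).
Proof.
move=> _ _ _ _ _ _ _ _ _ Z e W _ That H Gam _ _ u U _ _ _ RmT _ RmRm A B Nn.
have gain : Nn *m (Gam *m P *m H^T + Sig) = Nn *m Sig *m Rm *m Rm^T.
  by rewrite -mulmxA Nlast_mulGammaD mulmxA -RmRm -[RHS]mulmxA RmT.
by rewrite /A /B -mulmxDr subr_add_addr mulmxDr gain scalerDl scale1r.
Qed.
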